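(* Let $\lambda$ be a partition of $n$, let $\mathrm{Tab}(\lambda)$ be the set of standard tableaux of shape $\lambda$, and let $\aleph_\lambda$ be the bottom tableau of shape $\lambda$. Suppose $f(x_1,\dots,x_n)=\sum_{t\in \mathrm{Tab}(\lambda)} c_t\,\Delta^x_t$ with coefficients $c_t$ in a field of characteristic $0$ not depending on $x_1,\dots,x_n$. Then $\Delta^x_{\aleph_\lambda}(\aleph_\lambda)\neq 0$ and $$c_{\aleph_\lambda}=\frac{f(\aleph_\lambda)}{\Delta^x_{\aleph_\lambda}(\aleph_\lambda)}.$$
   Context: Diagrams are drawn in French convention: rows are numbered $0,1,2,\dots$ from the bottom, columns $0,1,\dots$ from the left. A standard tableau of shape $\lambda$ is a bijective filling of the boxes of the diagram of $\lambda$ with $1,\dots,n$, increasing from left to right in rows and from bottom to top in columns. For distinct indices, $\Delta^x(i_1,\dots,i_k)=\prod_{1\le p<q\le k}(x_{i_p}-x_{i_q})$. The Specht polynomial of a tableau $t$ is $\Delta^x_t=\prod_{\text{columns } C \text{ of } t}\Delta^x(\text{entries of } C \text{ read from bottom to top})$. The bottom tableau $\aleph_\lambda$ is the standard tableau whose rows, from the bottom row upwards, are filled with consecutive integers (each row from left to right). For a tableau $t$ and a function $f(x_1,\dots,x_n)$, $f(t)$ denotes the specialization $x_i\mapsto r$, where $r$ is the row index of the box of $t$ containing $i$. *)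

From HB Require Import structures.
From mathcomp Require Import all_boot all_order all_algebra.
From mathcomp Require Import mpoly.
Set Implicit Arguments. Unset Strict Implicit. Unset Printing Implicit Defensive.
Import GRing.Theory.
Local Open Scope ring_scope.

(* Conventions (French): a box is a pair (row, column), rows numbered from 0
   at the bottom, columns from 0 at the left.  The entries 1..n of a tableau
   are represented by i : 'I_n (i stands for the entry i+1, variable x_{i+1}
   is 'X_i).  A tableau filling with 1..n is encoded by its "position map"
   t : {ffun 'I_n -> 'I_n * 'I_n}, t i = box containing entry i. *)

Definition tabT (n : nat) := {ffun 'I_n -> 'I_n * 'I_n}.

Definition is_partition (n : nat) (la : seq nat) : bool :=
  [&& sorted geq la, all (fun p => 0 < p)%N la & sumn la == n].

Definition in_diagram (la : seq nat) (b : nat * nat) : bool :=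
  (b.2 < nth 0 la b.1)%N.

Definition trow n (t : tabT n) (i : 'I_n) : nat := (t i).1.
Definition tcol n (t : tabT n) (i : 'I_n) : nat := (t i).2.

Definition std_tab (la : seq nat) n (t : tabT n) : bool :=
  [&& injectiveb t,
      [forall i, in_diagram la (trow t i, tcol t i)],
      [forall r : 'I_n, forall c : 'I_n,
         in_diagram la (val r, val c) ==> [exists i, t i == (r, c)]],
      [forall i, forall j,
         ((trow t i == trow t j) && (tcol t i < tcol t j)%N) ==> (i < j)%N] &
      [forall i, forall j,
         ((tcol t i == tcol t j) && (trow t i < trow t j)%N) ==> (i < j)%N]].

(* Specht polynomial: product over columns C of Delta(entries of C read from
   bottom to top) = prod over pairs p<q (in that reading order) of x_p - x_q *)
Definition specht (F : fieldType) n (t : tabT n) : {mpoly F[n]} :=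
  \prod_(c < n) \prod_(i : 'I_n | tcol t i == c)
     \prod_(j : 'I_n | (tcol t j == c) && (trow t i < trow t j)%N) ('X_i - 'X_j).

(* bottom tableau: rows from the bottom filled with consecutive integers *)
Definition aleph_row (la : seq nat) (k : nat) : nat :=
  find (fun r => k < sumn (take r.+1 la))%N (iota 0 (size la)).
Definition aleph_col (la : seq nat) (k : nat) : nat :=
  (k - sumn (take (aleph_row la k) la))%N.
Definition aleph (la : seq nat) n : tabT n :=
  [ffun i : 'I_n => (insubd i (aleph_row la i), insubd i (aleph_col la i))].

Definition spec_at (F : fieldType) n (t : tabT n) (f : {mpoly F[n]}) : F :=
  f.@[fun i => (trow t i)%:R].

From HB Require Import structures.
From mathcomp Require Import all_boot all_order all_algebra.
From mathcomp Require Import mpoly.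
From mathcomp Require Import zify.
Set Implicit Arguments. Unset Strict Implicit.
Import GRing.Theory.

(* The bottom tableau fills the boxes in reading order (rows from the bottom,
   each from left to right).  An induction on the entries then shows that a
   standard tableau whose columns never contain two entries from the same row
   of the bottom tableau is the bottom tableau itself.  Hence for every other
   standard tableau t, some column of t holds two entries i, j that the
   specialization at the bottom tableau sends to the same value, and the factor
   x_i - x_j kills the Specht polynomial of t.  Evaluating the expansion of f at
   the bottom tableau therefore leaves only c times the evaluation of its own
   Specht polynomial, a product of nonzero differences of row indices in
   characteristic 0. *)

Local Notation psum la r := (sumn (take r la)).

Definition tbox n (t : tabT n) (i : 'I_n) : nat * nat := (trow t i, tcol t i).

Definition aleph_box (la : seq nat) (k : nat) : nat * nat :=
  (aleph_row la k, aleph_col la k).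

(* The entry that the bottom tableau puts in box [b]. *)
Definition aleph_index (la : seq nat) (b : nat * nat) : nat := psum la b.1 + b.2.

Lemma tbox_eq n (t t' : tabT n) i j : tbox t i = tbox t' j -> t i = t' j.
Proof.
case=> e_r e_c; rewrite [t i]surjective_pairing [t' j]surjective_pairing.
by congr pair; apply: val_inj.
Qed.

Lemma tbox_ext n (t t' : tabT n) : tbox t =1 tbox t' -> t = t'.
Proof. by move=> e; apply/ffunP => i; apply: tbox_eq. Qed.

Lemma find_iotaP (p : pred nat) m : has p (iota 0 m) ->
  [/\ find p (iota 0 m) < m, p (find p (iota 0 m))
    & forall s, s < find p (iota 0 m) -> ~~ p s].
Proof.
move=> hp; have lt_m : find p (iota 0 m) < m by rewrite -[X in _ < X](size_iota 0 m) -has_find.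
split=> //; first by have := nth_find 0 hp; rewrite nth_iota.
move=> s lt_s; have := before_find 0 lt_s.
by rewrite nth_iota ?add0n ?(ltn_trans lt_s lt_m) => [->|].
Qed.

Lemma psum_mono la r1 r2 : r1 <= r2 -> psum la r1 <= psum la r2.
Proof. by move=> le_r; rewrite -(subnKC le_r) takeD sumn_cat leq_addr. Qed.

Lemma psumS la r : r < size la -> psum la r.+1 = psum la r + nth 0 la r.
Proof. by move=> lt_r; rewrite (take_nth 0 lt_r) sumn_rcons. Qed.

Lemma in_diagram_size la b : in_diagram la b -> b.1 < size la.
Proof. by rewrite /in_diagram; case: (ltnP b.1 (size la)) => // ?; rewrite nth_default. Qed.

Lemma aleph_index_row_lt la r c b : in_diagram la (r, c) -> r < b.1 ->
  aleph_index la (r, c) < aleph_index la b.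
Proof.
move=> rc_in lt_r; have := psum_mono la lt_r.
rewrite psumS ?(in_diagram_size rc_in) //.
by move: rc_in; rewrite /in_diagram /aleph_index /=; lia.
Qed.

Lemma aleph_rowP la k r : r < size la -> psum la r <= k < psum la r.+1 ->
  aleph_row la k = r.
Proof.
move=> lt_r /andP[ge_k lt_k]; rewrite /aleph_row.
have [] := @find_iotaP (fun r => k < psum la r.+1) (size la).
  by apply/hasP; exists r; rewrite ?mem_iota.
set q := find _ _ => _ lt_q before_q.
case: (ltngtP q r) => // [lt_qr | lt_rq]; last by have := before_q _ lt_rq; rewrite lt_k.
by have := psum_mono la lt_qr; lia.
Qed.

Section BottomTableau.

Variables (n : nat) (la : seq nat).
Hypothesis la_part : is_partition n la.

Lemma size_partition : size la <= n.
Proof.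
case/and3P: la_part => _ pos /eqP <-.
by elim: la pos => //= a s IH /andP[a_gt0 /IH]; rewrite -add1n; apply: leq_add.
Qed.

Lemma psum_partition r : psum la r <= n.
Proof.
case/and3P: la_part => _ _ /eqP <-.
by rewrite -{2}(cat_take_drop r la) sumn_cat leq_addr.
Qed.

Lemma in_diagram_downward r r' c : in_diagram la (r', c) -> r <= r' ->
  in_diagram la (r, c).
Proof.
move=> rc_in le_r; have lt_r' := in_diagram_size rc_in.
case/and3P: la_part => sorted_la _ _; apply: leq_trans rc_in _.
have geq_trans : transitive geq by move=> ? ? ? /= ? ?; lia.
exact: (sorted_leq_nth geq_trans leqnn 0 sorted_la) (leq_ltn_trans le_r lt_r') lt_r' le_r.
Qed.

Lemma aleph_index_lt_n b : in_diagram la b -> aleph_index la b < n.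
Proof.
move=> b_in; apply: leq_trans (psum_partition b.1.+1).
by rewrite psumS ?ltn_add2l ?(in_diagram_size b_in).
Qed.

Lemma in_diagram_lt_n b : in_diagram la b -> b.1 < n /\ b.2 < n.
Proof.
move=> b_in; split; first exact: leq_trans (in_diagram_size b_in) size_partition.
by apply: leq_ltn_trans (aleph_index_lt_n b_in); rewrite leq_addl.
Qed.

Lemma aleph_row_spec k : k < n ->
  aleph_row la k < size la /\ psum la (aleph_row la k) <= k < psum la (aleph_row la k).+1.
Proof.
move=> lt_k; case/and3P: la_part => _ _ /eqP sum_la.
have size_gt0 : 0 < size la by case: la sum_la lt_k => //= <-.
have [] := @find_iotaP (fun r => k < psum la r.+1) (size la).
  apply/hasP; exists (size la).-1; first by rewrite mem_iota /= prednK.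
  by rewrite prednK // take_size sum_la.
rewrite -/(aleph_row la k) => lt_r lt_k' before_r; split=> //; rewrite lt_k' andbT.
case: (posnP (aleph_row la k)) => [-> | r_gt0]; first by rewrite take0.
have /before_r : (aleph_row la k).-1 < aleph_row la k by rewrite ltn_predL.
by rewrite prednK // -leqNgt.
Qed.

Lemma aleph_boxK k : k < n -> aleph_index la (aleph_box la k) = k.
Proof.
move=> /aleph_row_spec[_ /andP[ge_k _]].
by rewrite /aleph_index /aleph_box /aleph_col /=; lia.
Qed.

Lemma in_diagram_aleph_box k : k < n -> in_diagram la (aleph_box la k).
Proof.
move=> /aleph_row_spec[lt_r /andP[ge_k]].
by rewrite psumS // /in_diagram /aleph_box /aleph_col /=; lia.
Qed.

Lemma aleph_indexK b : in_diagram la b -> aleph_box la (aleph_index la b) = b.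
Proof.
case: b => r c b_in; have lt_r := in_diagram_size b_in.
have row_e : aleph_row la (aleph_index la (r, c)) = r.
  by apply: aleph_rowP; rewrite // leq_addr psumS // ltn_add2l.
by rewrite /aleph_box /aleph_col row_e /aleph_index addKn.
Qed.

Lemma tbox_aleph (i : 'I_n) : tbox (aleph la n) i = aleph_box la i.
Proof.
have [lt_r lt_c] := in_diagram_lt_n (in_diagram_aleph_box (ltn_ord i)).
by rewrite /tbox /trow /tcol ffunE /= !insubdK.
Qed.

Lemma trow_aleph (i : 'I_n) : trow (aleph la n) i = aleph_row la i.
Proof. by have [] := tbox_aleph i. Qed.

Lemma aleph_std : std_tab la (aleph la n).
Proof.
have boxK (i : 'I_n) : aleph_index la (tbox (aleph la n) i) = i.
  by rewrite tbox_aleph aleph_boxK.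
have box_in (i : 'I_n) : in_diagram la (tbox (aleph la n) i).
  by rewrite tbox_aleph in_diagram_aleph_box.
apply/and5P; split.
- apply/injectiveP => i j e; apply: ord_inj; rewrite -boxK -[val j]boxK.
  by rewrite /tbox /trow /tcol e.
- exact/forallP.
- apply/forallP => r; apply/forallP => c; apply/implyP => rc_in.
  apply/existsP; exists (Ordinal (aleph_index_lt_n rc_in)); apply/eqP.
  have := tbox_aleph (Ordinal (aleph_index_lt_n rc_in)); rewrite /= aleph_indexK //.
  by rewrite /tbox /trow /tcol [aleph _ _ _]surjective_pairing => -[/val_inj-> /val_inj->].
- apply/forallP => i; apply/forallP => j; apply/implyP => /andP[/eqP e_r lt_c].
  by rewrite -boxK -[val j]boxK /tbox /aleph_index /= e_r ltn_add2l.
- apply/forallP => i; apply/forallP => j; apply/implyP => /andP[/eqP e_c lt_r].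
  rewrite -boxK -[val j]boxK /tbox e_c aleph_index_row_lt //.
  by rewrite -e_c; apply: box_in.
Qed.

End BottomTableau.

Section StandardTableau.

Variables (la : seq nat) (n : nat) (t : tabT n).
Hypothesis t_std : std_tab la t.

Lemma tbox_inj : injective (tbox t).
Proof.
by case/and5P: t_std => /injectiveP t_inj _ _ _ _ i j /tbox_eq/t_inj.
Qed.

Lemma in_diagram_tbox i : in_diagram la (tbox t i).
Proof. by case/and5P: t_std => _ /forallP/(_ i). Qed.

Lemma tbox_onto b : in_diagram la b -> b.1 < n -> b.2 < n ->
  exists j, tbox t j = b.
Proof.
case: b => r c b_in lt_r lt_c; case/and5P: t_std => _ _ /forallP/(_ (Ordinal lt_r)).
move=> /forallP/(_ (Ordinal lt_c))/implyP/(_ b_in)/existsP[j /eqP t_j] _ _.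
by exists j; rewrite /tbox /trow /tcol t_j.
Qed.

Lemma std_row_lt i j : trow t i = trow t j -> tcol t i < tcol t j -> i < j.
Proof.
by move=> e_r lt_c; case/and5P: t_std => _ _ _ /forallP/(_ i)/forallP/(_ j); rewrite e_r eqxx lt_c.
Qed.

Lemma std_col_lt i j : tcol t i = tcol t j -> trow t i < trow t j -> i < j.
Proof.
by move=> e_c lt_r; case/and5P: t_std => _ _ _ _ /forallP/(_ i)/forallP/(_ j); rewrite e_c eqxx lt_r.
Qed.

End StandardTableau.

Section BottomTableauUnique.

Variables (n : nat) (la : seq nat) (t : tabT n).
Hypotheses (la_part : is_partition n la) (t_std : std_tab la t).
Hypothesis aleph_row_inj_in_column : forall i j : 'I_n,
  i != j -> tcol t i = tcol t j -> aleph_row la i != aleph_row la j.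

Section InductionStep.

Variable i : 'I_n.
Hypothesis tbox_lt : forall j : 'I_n, j < i -> tbox t j = aleph_box la j.

Lemma aleph_index_tbox_ge : i <= aleph_index la (tbox t i).
Proof.
rewrite leqNgt; apply/negP => lt_i.
have b_in := in_diagram_tbox t_std i.
pose j := Ordinal (aleph_index_lt_n la_part b_in).
have : tbox t j = tbox t i by rewrite tbox_lt // aleph_indexK.
by move/(tbox_inj t_std)/(congr1 val) => /= e_ji; move: lt_i; rewrite e_ji ltnn.
Qed.

Lemma aleph_index_tbox_le : aleph_index la (tbox t i) <= i.
Proof.
rewrite leqNgt; apply/negP => gt_i.
have b_in := in_diagram_tbox t_std i.
have a_in := in_diagram_aleph_box la_part (ltn_ord i).
have e_a : aleph_index la (aleph_box la i) = i := aleph_boxK la_part (ltn_ord i).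
have [lt_ar lt_ac] := in_diagram_lt_n la_part a_in.
have [lt_tr lt_tc] := in_diagram_lt_n la_part b_in.
(* If t puts i higher than the bottom tableau does, the entry of t just below
   in the row of i is smaller, so by induction it shares that row in the bottom
   tableau; if t puts i to the right, the entry of t in the box of i in the
   bottom tableau is smaller, so by induction it is i. *)
case: (ltngtP (trow t i) (aleph_row la i)) => [lt_r | gt_r | e_r].
- by move: gt_i; rewrite -{1}e_a ltnNge ltnW // aleph_index_row_lt.
- have b'_in := in_diagram_downward la_part b_in (ltnW gt_r).
  have [j [e_rj e_cj]] := tbox_onto t_std b'_in lt_ar lt_tc.
  have lt_ji : j < i by apply: (std_col_lt t_std e_cj); rewrite e_rj.
  have neq_ji : j != i by rewrite neq_ltn lt_ji.
  have := aleph_row_inj_in_column neq_ji e_cj.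
  by case: (tbox_lt lt_ji) => <- _; rewrite e_rj eqxx.
- have [j t_j] := tbox_onto t_std a_in lt_ar lt_ac.
  have lt_c : aleph_col la i < tcol t i.
    by move: gt_i; rewrite -{1}e_a /aleph_index /= e_r ltn_add2l.
  have lt_ji : j < i by case: t_j => e_rj e_cj; apply: (std_row_lt t_std); rewrite ?e_rj ?e_cj ?e_r.
  have e_ji : val j = i by rewrite -e_a -t_j tbox_lt // (aleph_boxK la_part).
  by move: lt_ji; rewrite e_ji ltnn.
Qed.

End InductionStep.

Lemma tbox_eq_aleph_box i : tbox t i = aleph_box la i.
Proof.
suff tbox_lt : forall m (j : 'I_n), j < m -> tbox t j = aleph_box la j.
  exact: tbox_lt i.+1 i (ltnSn i).
elim=> [//|m IH] {}i lt_im.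
have tbox_lt (j : 'I_n) : j < i -> tbox t j = aleph_box la j.
  by move=> lt_ji; apply: IH; apply: leq_trans lt_ji lt_im.
have e_i : aleph_index la (tbox t i) = i.
  by apply/eqP; rewrite eqn_leq aleph_index_tbox_le ?aleph_index_tbox_ge.
by rewrite -e_i aleph_indexK ?(in_diagram_tbox t_std).
Qed.

Lemma std_tab_eq_aleph : t = aleph la n.
Proof. by apply: tbox_ext => i; rewrite tbox_aleph ?tbox_eq_aleph_box. Qed.

End BottomTableauUnique.

Local Open Scope ring_scope.

Section SpechtEvaluation.

Variables (F : fieldType) (n : nat).

Lemma meval_specht_eq0 (t : tabT n) (v : 'I_n -> F) i j :
  tcol t i = tcol t j -> (trow t i < trow t j)%N -> v i = v j ->
  (specht F t).@[v] = 0.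
Proof.
move=> e_c lt_r e_v; rewrite /specht rmorph_prod (bigD1 (t i).2) //=.
rewrite rmorph_prod (bigD1 i) //= rmorph_prod (bigD1 j) /=; last by rewrite -e_c eqxx lt_r.
by rewrite raddfB /= !mevalXU e_v subrr !mul0r.
Qed.

(* Each factor specializes to [r - r'] with [r < r'], nonzero in characteristic 0. *)
Lemma spec_at_specht_neq0 (charF0 : [pchar F] =i pred0) (t : tabT n) :
  spec_at t (specht F t) != 0.
Proof.
rewrite /spec_at /specht rmorph_prod; apply/prodf_neq0 => c _.
rewrite rmorph_prod; apply/prodf_neq0 => i _.
rewrite rmorph_prod; apply/prodf_neq0 => j /andP[_ lt_r].
rewrite raddfB /= !mevalXU -oppr_eq0 opprB -(natrB _ (ltnW lt_r)).
by rewrite (pcharf0P F).1 // subn_eq0 -ltnNge.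
Qed.

Lemma spec_at_aleph_specht_eq0 (la : seq nat) (t : tabT n) :
  is_partition n la -> std_tab la t -> t != aleph la n ->
  spec_at (aleph la n) (specht F t) = 0.
Proof.
move=> la_part t_std; apply: contraNeq => spec_neq0.
apply/eqP/std_tab_eq_aleph => // i j neq_ij e_c; apply: contra spec_neq0 => /eqP e_r.
have neq_r : trow t i != trow t j.
  by apply: contra neq_ij => /eqP e; apply/eqP/(tbox_inj t_std); rewrite /tbox e e_c.
have e_v : trow (aleph la n) i = trow (aleph la n) j by rewrite !trow_aleph.
rewrite /spec_at; apply/eqP.
case: (ltngtP (trow t i) (trow t j)) neq_r => // [lt_r | gt_r] _.
- by apply: (meval_specht_eq0 e_c lt_r); rewrite /= e_v.
- by apply: (meval_specht_eq0 (esym e_c) gt_r); rewrite /= e_v.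
Qed.

End SpechtEvaluation.

Theorem mainTheorem1 (F : fieldType) (charF0 : [pchar F] =i pred0)
  (n : nat) (la : seq nat) (Hla : is_partition n la)
  (c : tabT n -> F) (f : {mpoly F[n]})
  (Hf : f = \sum_(t : tabT n | std_tab la t) c t *: specht F t) :
  spec_at (aleph la n) (specht F (aleph la n)) != 0 /\
  c (aleph la n) = spec_at (aleph la n) f / spec_at (aleph la n) (specht F (aleph la n)).
Proof.
have spec_neq0 := spec_at_specht_neq0 charF0 (aleph la n).
split=> //; apply/(canRL (mulfK spec_neq0)).
rewrite Hf /spec_at raddf_sum (bigD1 (aleph la n)) ?aleph_std //= mevalZ.
rewrite big1 ?addr0 // => t /andP[t_std neq_t].
by rewrite mevalZ -/(spec_at _ _) (spec_at_aleph_specht_eq0 F Hla t_std neq_t) mulr0.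
Qed.
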